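(* Let $\Lambda$ be a cohomology algebra of $b^+=1$ type with $I_T=0$ and $\Gamma\cong\langle1\rangle\oplus n\langle-1\rangle$, $0\le n\le9$, with orthogonal basis $\{H,E_1,\dots,E_n\}$, $H\cdot H=1$, $E_i\cdot E_i=-1$. Let $A=aH-\sum_{i=1}^nb_iE_i\ne0$ be reduced with $A\cdot A\ge0$. Then $h(A)=0$ exactly when $A\in\{H-E_1,\ H,\ 2H\}$ or $a=b_1+1$ with $b_1\ge1$, $b_2\in\{0,1\}$, $b_i=0$ for $i\ge3$; and $h(A)<0$ exactly when $A=a(H-E_1)$ with $a\ge2$. For all other such $A$, $h(A)>0$.
   Context: Notation: $\Lambda$ a cohomology algebra (graded commutative algebra over $\mathbb{Z}$, free of finite rank in each degree, $p:\Lambda^4\cong\mathbb{Z}$ with perfect pairings); $\Gamma(x,y)=x\cdot y=p(xy)$ on $\Lambda^2$, signature $\sigma$; $I_T\subseteq\Lambda^2$ generated by products of elements of $\Lambda^1$. Characteristic: $c\cdot A\equiv A\cdot A\pmod 2$ for all $A$. Since $I_T=0$, adjunction classes are the characteristic $c$ with $c\cdot c>\sigma$. $h_c(A)=1+\frac{A\cdot A-|c\cdot A|}{2}$ for $A\ne0$, $h_c(0)=0$; $h(A)=\max_c h_c(A)$ over adjunction classes. $A=aH-\sum b_iE_i$ is reduced if $b_1\ge\dots\ge b_n\ge0$ and $a\ge b_1$ ($n=1$), $a\ge b_1+b_2$ ($n=2$), $a\ge b_1+b_2+b_3$ ($n\ge3$), $a\ge0$ ($n=0$); coefficients $b_i$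 with $i>n$ are taken to be $0$. *)

From HB Require Import structures.
From mathcomp Require Import all_boot all_order all_algebra.
Set Implicit Arguments. Unset Strict Implicit. Unset Printing Implicit Defensive.
Import Order.TTheory GRing.Theory Num.Theory.
Local Open Scope ring_scope.

(* An element of Lambda^2 ~ Gamma = <1> + n<-1>, written in the orthogonal
   basis {H, E_1, ..., E_n} as  a H - sum_i b_i E_i ; the pair (a, b). *)
Definition cls (n : nat) := (int * ('I_n -> int))%type.

Definition dot n (A C : cls n) : int :=
  A.1 * C.1 - \sum_(i < n) A.2 i * C.2 i.

(* 1-based coefficient b_k, with b_k = 0 for k = 0 or k > n. *)
Definition bcoef n (A : cls n) (k : nat) : int :=
  if k is k'.+1 then
    (if @insub _ (fun m : nat => (m < n)%N) 'I_n k' is Some i then A.2 i else 0)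
  else 0.

Definition nonzero_cls n (A : cls n) : Prop :=
  A.1 <> 0 \/ exists i, A.2 i <> 0.

Definition characteristic n (c : cls n) : Prop :=
  forall A : cls n, (dot c A == dot A A %[mod 2])%Z.

(* Signature of <1> + n<-1> is 1 - n. Since I_T = 0, adjunction classes are
   the characteristic c with c.c > sigma. *)
Definition adjunction_class n (c : cls n) : Prop :=
  characteristic c /\ (1 - n%:Z) < dot c c.

(* h_c(A) = 1 + (A.A - |c.A|)/2 for A <> 0, h_c(0) = 0.  The division is
   exact for characteristic c. *)
Definition hc n (c A : cls n) : int :=
  if (A.1 == 0) && [forall i, A.2 i == 0] then 0
  else 1 + ((dot A A - `|dot c A|) %/ 2)%Z.

Definition is_h n (A : cls n) (m : int) : Prop :=
  (exists c, adjunction_class c /\ hc c A = m) /\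
  (forall c, adjunction_class c -> hc c A <= m).

Definition reduced n (A : cls n) : Prop :=
  (forall i j : 'I_n, (i <= j)%N -> A.2 j <= A.2 i) /\
  (forall i : 'I_n, 0 <= A.2 i) /\
  (match n with
   | 0 => 0 <= A.1
   | 1 => bcoef A 1 <= A.1
   | 2 => bcoef A 1 + bcoef A 2 <= A.1
   | _ => bcoef A 1 + bcoef A 2 + bcoef A 3 <= A.1
   end).

Definition h_zero_case n (A : cls n) : Prop :=
  (A.1 = 1 /\ bcoef A 1 = 1 /\ forall k, (2 <= k)%N -> bcoef A k = 0) \/
  (A.1 = 1 /\ forall k, bcoef A k = 0) \/
  (A.1 = 2 /\ forall k, bcoef A k = 0) \/
  (A.1 = bcoef A 1 + 1 /\ 1 <= bcoef A 1 /\
   (bcoef A 2 = 0 \/ bcoef A 2 = 1) /\ forall k, (3 <= k)%N -> bcoef A k = 0).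

Definition h_neg_case n (A : cls n) : Prop :=
  2 <= A.1 /\ bcoef A 1 = A.1 /\ forall k, (2 <= k)%N -> bcoef A k = 0.

(* The canonical class K = 3H - sum E_i realises h(A).  Write an adjunction
   class with nonnegative H-coefficient as c = (2q+1)H - sum (2f_i+1)E_i.  The
   adjunction inequality c.c > 1 - n says sum f_i(f_i+1) < q(q+1), so by
   Cauchy-Schwarz the partial sums of the f_i are at most (q-1), 2(q-1) and then
   3(q-1) (this is where n <= 9 enters).  Abel summation against the
   nonincreasing b_i gives sum f_i b_i <= (q-1)(b_1+b_2+b_3) <= (q-1)a, which is
   K.A <= c.A.  Hence h(A) = 1 + (A.A - K.A)/2, and the classification reduces to
   deciding when a(a-3) - sum b_i(b_i-1) = A.A - K.A equals or is below -2: it is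
   nonnegative once b_3 >= 1, and otherwise only a, b_1, b_2 are involved. *)

From HB Require Import structures.
From mathcomp Require Import all_boot all_order all_algebra zify ring lra.
Import Order.TTheory GRing.Theory Num.Theory.
Local Open Scope ring_scope.
Set Implicit Arguments. Unset Strict Implicit. Unset Printing Implicit Defensive.

#[local] Arguments bcoef : simpl never.

Lemma mul_succ_ge0 (x : int) : 0 <= x * (x + 1).
Proof. by case: (lerP 0 x) => hx; nia. Qed.

Lemma mul_pred_le (x y : int) : 0 <= x -> x <= y -> x * (x - 1) <= y * (y - 1).
Proof.
move=> x_ge0 x_le_y; have : 0 <= (y - x) * (y + x - 1).
  by case: (ler0P y) => [y_le0|y_gt0]; [have -> : y = x by lia | apply: mulr_ge0]; lia.
nia.
Qed.

Lemma dvdz_mul_pred (x : int) : (2 %| x * (x - 1))%Z.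
Proof.
have := divz_eq x 2; have := @modz_ge0 x 2 isT; have := @ltz_pmod x 2 isT.
set q := (x %/ 2)%Z; set r := (x %% 2)%Z => r_lt2 r_ge0 ->.
apply/dvdzP; have [->|->] : r = 0 \/ r = 1 by lia.
  by exists (q * (q * 2 - 1)); ring.
by exists (q * (q * 2 + 1)); ring.
Qed.

Lemma sum_widen (V : nmodType) (F : nat -> V) m N : (m <= N)%N ->
  (forall k, (m <= k)%N -> F k = 0) -> \sum_(k < m) F k = \sum_(k < N) F k.
Proof.
move=> le_mN F0; rewrite (big_ord_widen _ _ le_mN) big_mkcond; apply: eq_bigr => i _.
by case: ifPn => // /negbTE; rewrite ltnNge => /negbFE /F0 ->.
Qed.

Lemma sum_prefix_le (F : nat -> int) k m : (k <= m)%N -> (forall i, 0 <= F i) ->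
  \sum_(i < k) F i <= \sum_(i < m) F i.
Proof.
move=> le_km F_ge0; rewrite (big_ord_widen _ _ le_km) big_mkcond.
by apply: ler_sum => i _; case: ifP.
Qed.

Lemma abel_summation (f b : nat -> int) m :
  \sum_(i < m) f i * b i =
  \sum_(k < m) (\sum_(i < k.+1) f i) * (b k - b k.+1) + (\sum_(i < m) f i) * b m.
Proof.
elim: m => [|m IHm]; first by rewrite !big_ord0 mul0r addr0.
rewrite big_ord_recr IHm /= [\sum_(k < m.+1) _]big_ord_recr.
by rewrite [\sum_(i < m.+1) f i]big_ord_recr /=; ring.
Qed.

Lemma abel_le (f g b : nat -> int) m :
  (forall k, (k < m)%N -> b k.+1 <= b k) -> 0 <= b m ->
  (forall k, (k <= m)%N -> \sum_(i < k) f i <= \sum_(i < k) g i) ->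
  \sum_(i < m) f i * b i <= \sum_(i < m) g i * b i.
Proof.
move=> b_decr bm_ge0 fg; rewrite !abel_summation; apply: lerD.
  apply: ler_sum => k _; apply: ler_wpM2r; first by rewrite subr_ge0 b_decr.
  exact: fg.
by apply: ler_wpM2r => //; exact: fg.
Qed.

Lemma sqr_sum_le (f : nat -> int) k :
  (\sum_(i < k) f i) ^+ 2 <= k%:Z * \sum_(i < k) f i ^+ 2.
Proof.
elim: k => [|k IHk]; first by rewrite !big_ord0.
rewrite !big_ord_recr /=; set S := \sum_(i < k) f i; set Q := \sum_(i < k) f i ^+ 2.
suff cross : 2 * S * f k <= k%:Z * f k ^+ 2 + Q.
  by rewrite intS; rewrite !expr2 in cross *; lia.
case: k => [|k] in IHk S Q *; first by rewrite /S /Q !big_ord0; lia.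
rewrite -subr_ge0 -(@pmulr_rge0 _ k.+1%:Z) //.
by have := sqr_ge0 (k.+1%:Z * f k.+1 - S); rewrite !expr2 in IHk * => sq; nia.
Qed.

Lemma partial_sum_le (f : nat -> int) (u : int) k : (k <= 9)%N -> 0 <= u ->
  \sum_(i < k) f i * (f i + 1) <= u ^+ 2 + 3 * u + 1 ->
  \sum_(i < k) f i <= (minn k 3)%:Z * u.
Proof.
move=> k_le9 u_ge0; have := sqr_sum_le f k.
set S := \sum_(i < k) f i; set Q := \sum_(i < k) f i ^+ 2 => CS.
have -> : \sum_(i < k) f i * (f i + 1) = Q + S.
  by rewrite /Q /S -big_split; apply: eq_bigr => i _ /=; ring.
move=> bound; have {CS bound} : S ^+ 2 + k%:Z * S <= k%:Z * (u ^+ 2 + 3 * u + 1).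
  have k_ge0 : 0 <= k%:Z by [].
  by rewrite !expr2 in CS bound *; nia.
by clearbody S Q; rewrite !expr2; case: k k_le9 S Q => [|[|[|k]]] k_le9 //=; nia.
Qed.

Lemma sum_first3 (u : int) k :
  \sum_(i < k) (if (i < 3)%N then u else 0) = (minn k 3)%:Z * u.
Proof.
elim: k => [|k IHk]; first by rewrite big_ord0 min0n mul0r.
rewrite big_ord_recr /= IHk; case: ltnP => hk.
  by rewrite (minn_idPl hk) intS; ring.
by rewrite (minn_idPr (leqW hk)) addr0.
Qed.

Lemma sum_first3_mul (u : int) (b : nat -> int) m : (m <= 9)%N ->
  (forall k, (m <= k)%N -> b k = 0) ->
  \sum_(i < m) (if (i < 3)%N then u else 0) * b i = u * (b 0%N + b 1%N + b 2%N).
Proof.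
move=> m_le9 b_out.
rewrite (sum_widen (F := fun k => (if (k < 3)%N then u else 0) * b k) m_le9);
  last by move=> k /b_out ->; rewrite mulr0.
by rewrite !big_ord_recr big_ord0 /=; ring.
Qed.

Lemma nonincreasingW (b : nat -> int) i j : (forall k, b k.+1 <= b k) ->
  (i <= j)%N -> b j <= b i.
Proof.
move=> b_decr /subnK <-; elim: (j - i)%N => [|k IHk] //=.
exact: le_trans (b_decr _) IHk.
Qed.

Lemma first3_bound (f b : nat -> int) (u : int) m : (m <= 9)%N -> 0 <= u ->
  (forall k, 0 <= b k) -> (forall k, b k.+1 <= b k) ->
  (forall k, (m <= k)%N -> b k = 0) ->
  \sum_(i < m) f i * (f i + 1) <= u ^+ 2 + 3 * u + 1 ->
  \sum_(i < m) f i * b i <= u * (b 0%N + b 1%N + b 2%N).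
Proof.
move=> m_le9 u_ge0 b_ge0 b_decr b_out bound.
rewrite -(sum_first3_mul u m_le9 b_out).
apply: (@abel_le f (fun i => if (i < 3)%N then u else 0) b m).
- by move=> k _; exact: b_decr.
- exact: b_ge0.
move=> k le_km; rewrite (sum_first3 u k); apply: (@partial_sum_le f u k) => //.
  exact: leq_trans m_le9.
apply: le_trans bound; apply: (@sum_prefix_le (fun i => f i * (f i + 1))) => // i.
exact: mul_succ_ge0.
Qed.

(* a (a - 3) - sum_i b_i (b_i - 1) is A.A - K.A for A = aH - sum_i b_i E_i. *)
Lemma two_coef_defect_cases (a b0 b1 : int) :
  1 <= a -> 0 <= b1 -> b1 <= b0 -> b0 + b1 <= a ->
  let d := a * (a - 3) - (b0 * (b0 - 1) + b1 * (b1 - 1)) in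
  (d = -2 <-> (a = 1 /\ b0 = 1 /\ b1 = 0) \/ (a = 1 /\ b0 = 0 /\ b1 = 0) \/
              (a = 2 /\ b0 = 0 /\ b1 = 0) \/
              (a = b0 + 1 /\ 1 <= b0 /\ (b1 = 0 \/ b1 = 1))) /\
  (d < -2 <-> 2 <= a /\ b0 = a /\ b1 = 0).
Proof.
move=> a_ge1 b1_ge0 b10 b01a d.
have [t def_a] : exists t, a = b0 + b1 + t by exists (a - b0 - b1); ring.
have t_ge0 : 0 <= t by lia.
have -> : d = 2 * b0 * b1 + 2 * t * (b0 + b1) + t * t - 2 * b0 - 2 * b1 - 3 * t.
  by rewrite /d def_a; ring.
case: (lerP t 2) => [t_le2|t_gt2]; last first.
  have : 0 <= (t - 3) * t by apply: mulr_ge0; lia.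
  have : 0 <= b0 * b1 by apply: mulr_ge0; lia.
  have : 0 <= (t - 3) * (b0 + b1) by apply: mulr_ge0; lia.
  lia.
have [t_0|[t_1|t_2]] : t = 0 \/ t = 1 \/ t = 2 by lia.
all: subst t.
all: have [b1_0|b1_gt0] : b1 = 0 \/ 0 < b1 by lia.
all: try by subst b1; lia.
- have [b1_1|b1_gt1] : b1 = 1 \/ 1 < b1 by lia.
    by subst b1; lia.
  have : 0 <= (b0 - 2) * (b1 - 2) by apply: mulr_ge0; lia.
  lia.
- have : 0 <= (b0 - 1) * (b1 - 1) by apply: mulr_ge0; lia.
  lia.
- have : 0 <= b0 * b1 by apply: mulr_ge0; lia.
  lia.
Qed.

Lemma sum9_first2 (F : nat -> int) : (forall k, (2 <= k)%N -> F k = 0) ->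
  \sum_(k < 9) F k = F 0%N + F 1%N.
Proof.
by move=> F0; rewrite -(sum_widen (m := 2)) // !big_ord_recr big_ord0 /= add0r.
Qed.

Lemma third_coef_defect_ge0 (a : int) (b : nat -> int) :
  (forall k, 0 <= b k) -> (forall k, b k.+1 <= b k) ->
  b 0%N + b 1%N + b 2%N <= a -> 1 <= b 2%N ->
  0 <= a * (a - 3) - \sum_(k < 9) b k * (b k - 1).
Proof.
move=> b_ge0 b_decr first3_le b2_ge1.
have b10 := b_decr 0%N; have b21 := b_decr 1%N.
have tail : \sum_(k < 7) b k.+2 * (b k.+2 - 1) <= 7 * (b 2%N * (b 2%N - 1)).
  have term_le k : b k.+2 * (b k.+2 - 1) <= b 2%N * (b 2%N - 1).
    exact: mul_pred_le (b_ge0 _) (@nonincreasingW b 2 k.+2 b_decr isT).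
  apply: le_trans (ler_sum _ (fun (k : 'I_7) _ => term_le k)) _.
  by rewrite sumr_const card_ord -mulr_natr natz; lia.
rewrite 2!big_ord_recl /= /bump /= !add1n.
under eq_bigr => i _ do rewrite !add1n.
move: tail; set T := \sum_(k < 7) _ => tail.
have : 0 <= (a - (b 0%N + b 1%N + b 2%N)) * (a + (b 0%N + b 1%N + b 2%N) - 3).
  by apply: mulr_ge0; lia.
have : 0 <= (b 2%N - 1) * (b 0%N - b 2%N) by apply: mulr_ge0; lia.
have : 0 <= (b 2%N - 1) * (b 1%N - b 2%N) by apply: mulr_ge0; lia.
have : 0 <= (b 0%N - b 2%N) * (b 1%N - b 2%N) by apply: mulr_ge0; lia.
have : 0 <= b 2%N * (b 0%N - b 2%N) by apply: mulr_ge0; lia.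
have : 0 <= b 2%N * (b 1%N - b 2%N) by apply: mulr_ge0; lia.
nia.
Qed.

Section Classes.

Variable n : nat.
Implicit Types A B c : cls n.

Lemma bcoef_ord A (i : 'I_n) : bcoef A i.+1 = A.2 i.
Proof.
rewrite /bcoef; case: insubP => [j _ /val_inj -> //|]; by rewrite ltn_ord.
Qed.

Lemma bcoef_out A k : (n <= k)%N -> bcoef A k.+1 = 0.
Proof. by move=> le_nk; rewrite /bcoef insubF // ltnNge le_nk. Qed.

Lemma dotE A B : dot A B = A.1 * B.1 - \sum_(k < n) bcoef A k.+1 * bcoef B k.+1.
Proof. by congr (_ - _); apply: eq_bigr => i _; rewrite !bcoef_ord. Qed.

Definition canonical_class : cls n := (3, fun _ => 1).
Local Notation K := canonical_class.

Lemma dot_canonical A : dot K A = 3 * A.1 - \sum_(k < n) bcoef A k.+1.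
Proof. by congr (_ - _); apply: eq_bigr => i _; rewrite mul1r bcoef_ord. Qed.

Lemma canonical_characteristic : characteristic K.
Proof.
move=> B; rewrite eqz_mod_dvd.
have -> : dot K B - dot B B =
    2 * B.1 - B.1 * (B.1 - 1) + \sum_(i < n) B.2 i * (B.2 i - 1).
  have -> : \sum_(i < n) B.2 i * (B.2 i - 1) =
      \sum_(i < n) B.2 i * B.2 i - \sum_(i < n) 1 * B.2 i.
    by rewrite -sumrB; apply: eq_bigr => i _; ring.
  by rewrite /dot /=; ring.
rewrite rpredD ?rpred_sum // => [|i _]; last exact: dvdz_mul_pred.
by rewrite rpredB ?dvdz_mul_pred ?dvdz_mulr.
Qed.

Lemma canonical_adjunction_class : adjunction_class K.
Proof.
split; first exact: canonical_characteristic.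
rewrite /dot /= (eq_bigr (fun _ => 1)) => [|i _]; last by rewrite mulr1.
by rewrite sumr_const card_ord -natz; lia.
Qed.

Definition oppc c : cls n := (- c.1, fun i => - c.2 i).

Lemma dot_oppc c A : dot (oppc c) A = - dot c A.
Proof.
rewrite /dot /= (eq_bigr (fun i => - (c.2 i * A.2 i))) => [|i _]; last exact: mulNr.
by rewrite sumrN; ring.
Qed.

Lemma adjunction_class_oppc c : adjunction_class c -> adjunction_class (oppc c).
Proof.
case=> c_char c_adj; split.
  move=> B; rewrite dot_oppc; move: (c_char B); rewrite !eqz_mod_dvd => c_dvd.
  have -> : - dot c B - dot B B = - (dot c B - dot B B) - 2 * dot B B by ring.
  by rewrite rpredB ?rpredN ?dvdz_mulr.
suff -> : dot (oppc c) (oppc c) = dot c c by [].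
rewrite dot_oppc /dot /= (eq_bigr (fun i => - (c.2 i * c.2 i))) => [|i _].
  by rewrite sumrN; ring.
by rewrite mulrN.
Qed.

Lemma characteristic_odd_coefs c : characteristic c ->
  (exists q, c.1 = 2 * q + 1) /\ forall i, exists q, c.2 i = 2 * q + 1.
Proof.
move=> c_char; split.
  move: (c_char (1, fun _ => 0)); rewrite eqz_mod_dvd /dot /=.
  rewrite !big1 => [/dvdzP [q hq]|i _|i _]; [by exists q; lia | exact: mulr0 | exact: mulr0].
move=> i; move: (c_char (0, fun j => (j == i)%:R)); rewrite eqz_mod_dvd /dot /=.
have delta_sum (F : 'I_n -> int) : \sum_(j < n) F j * (j == i)%:R = F i.
  by rewrite (bigD1 i) //= eqxx mulr1 big1 ?addr0 // => j /negbTE ->; rewrite mulr0.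
rewrite delta_sum (delta_sum (fun j => (j == i)%:R)) eqxx mulr1n => /dvdzP [q hq].
by exists (- q); lia.
Qed.

Lemma reduced_ge0 A : reduced A -> forall k, 0 <= bcoef A k.+1.
Proof.
case=> _ [A_ge0 _] k; case: (ltnP k n) => [lt_kn|le_nk].
  by rewrite -[k]/(Ordinal lt_kn : nat) bcoef_ord.
by rewrite bcoef_out.
Qed.

Lemma reduced_nonincreasing A : reduced A -> forall k, bcoef A k.+2 <= bcoef A k.+1.
Proof.
move=> A_red k; case: (ltnP k.+1 n) => [lt_k1n|le_nk1]; last first.
  by rewrite bcoef_out //; exact: reduced_ge0.
rewrite -[k.+1]/(Ordinal lt_k1n : nat) -[k]/(Ordinal (ltnW lt_k1n) : nat) !bcoef_ord.
by apply: A_red.1 => /=.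
Qed.

Lemma hc_nonzero c A : nonzero_cls A ->
  hc c A = 1 + ((dot A A - `|dot c A|) %/ 2)%Z.
Proof.
rewrite /hc => A_nz; case: ifP => // /andP [/eqP A1_0 /forallP A2_0].
by case: A_nz => [//|[i]]; rewrite (eqP (A2_0 i)).
Qed.

End Classes.

Lemma reduced_first3_le n (A : cls n) :
  reduced A -> bcoef A 1 + bcoef A 2 + bcoef A 3 <= A.1.
Proof.
case=> _ [_]; case: n A => [|[|[|m]]] A // sum_le.
- by rewrite !bcoef_out.
- by rewrite [bcoef A 2]bcoef_out // [bcoef A 3]bcoef_out // !addr0.
- by rewrite [bcoef A 3]bcoef_out // addr0.
Qed.

Section ReducedClasses.

Variables (n : nat) (A : cls n).
Hypothesis A_red : reduced A.
Local Notation K := (canonical_class n).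

Lemma reduced_nonzero_gt0 : nonzero_cls A -> 0 < A.1.
Proof.
have first3_le := reduced_first3_le A_red.
have := reduced_ge0 A_red 0; have := reduced_ge0 A_red 1; have := reduced_ge0 A_red 2.
move=> b2_ge0 b1_ge0 b0_ge0; rewrite ltNge; apply: contraPN => A1_le0.
have b0_0 : bcoef A 1 = 0 by lia.
case=> [|[i]]; first by lia.
apply; apply/eqP; rewrite eq_le -bcoef_ord reduced_ge0 // andbT -b0_0.
exact: (@nonincreasingW (fun k => bcoef A k.+1) 0 i (reduced_nonincreasing A_red)).
Qed.

Hypothesis n_le9 : (n <= 9)%N.

Lemma canonical_dot_le c : adjunction_class c -> 0 <= c.1 -> dot K A <= dot c A.
Proof.
case=> c_char c_adj c1_ge0; have [[q c1E] c2E] := characteristic_odd_coefs c_char.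
pose f k := ((bcoef c k.+1 - 1) %/ 2)%Z.
have c2_f (i : 'I_n) : c.2 i = 2 * f i + 1.
  by rewrite /f bcoef_ord; have [r ->] := c2E i; rewrite addrK mulKz.
have dot_cA : dot c A = c.1 * A.1 -
    (2 * \sum_(k < n) f k * bcoef A k.+1 + \sum_(k < n) bcoef A k.+1).
  rewrite dotE mulr_sumr -big_split; congr (_ - _); apply: eq_bigr => i _.
  by rewrite !bcoef_ord c2_f /=; ring.
have dot_cc : dot c c = c.1 * c.1 - (4 * \sum_(k < n) f k * (f k + 1) + n%:Z).
  rewrite /dot (eq_bigr (fun i : 'I_n => 4 * (f i * (f i + 1)) + 1)) => [|i _].
    by rewrite big_split /= sumr_const card_ord -mulr_sumr -natz.
  by rewrite c2_f; ring.
have f_ge0 : 0 <= \sum_(k < n) f k * (f k + 1).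
  by apply: sumr_ge0 => i _; exact: mul_succ_ge0.
have q_ge1 : 1 <= q by move: c_adj; rewrite dot_cc c1E; nia.
have f_bound : \sum_(k < n) f k * (f k + 1) <= (q - 1) ^+ 2 + 3 * (q - 1) + 1.
  by move: c_adj; rewrite dot_cc c1E expr2; nia.
have u_ge0 : 0 <= q - 1 by lia.
have := first3_bound n_le9 u_ge0 (reduced_ge0 A_red) (reduced_nonincreasing A_red)
  (fun k => @bcoef_out n A k) f_bound.
have := reduced_first3_le A_red.
rewrite dot_cA dot_canonical c1E => first3_le fb_le.
have : 0 <= (q - 1) * (A.1 - (bcoef A 1 + bcoef A 2 + bcoef A 3)) by apply: mulr_ge0; lia.
nia.
Qed.

Lemma canonical_dot_ge0 : 0 <= dot K A.
Proof.
have ones : \sum_(k < n) 1 * (1 + 1) <= 3 ^+ 2 + 3 * 3 + 1 :> int.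
  by rewrite sumr_const card_ord -mulr_natr natz; lia.
have three_ge0 : 0 <= 3 :> int by [].
(* The constant weights 1 satisfy the hypothesis of first3_bound with u = 3. *)
have sum_le : \sum_(k < n) bcoef A k.+1 <= 3 * (bcoef A 1 + bcoef A 2 + bcoef A 3).
  rewrite -(eq_bigr _ (fun (i : 'I_n) _ => mul1r (bcoef A i.+1))).
  exact: (first3_bound (f := fun _ => 1) n_le9 three_ge0 (reduced_ge0 A_red)
    (reduced_nonincreasing A_red) (fun k => @bcoef_out n A k) ones).
by have := reduced_first3_le A_red; rewrite dot_canonical; lia.
Qed.

Lemma defect_canonical : dot A A - dot K A =
  A.1 * (A.1 - 3) - \sum_(k < 9) bcoef A k.+1 * (bcoef A k.+1 - 1).
Proof.
rewrite -(sum_widen (F := fun k => bcoef A k.+1 * (bcoef A k.+1 - 1)) n_le9) => [|k le_nk];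
  last by rewrite bcoef_out ?mul0r.
have -> : \sum_(k < n) bcoef A k.+1 * (bcoef A k.+1 - 1) =
    \sum_(k < n) bcoef A k.+1 * bcoef A k.+1 - \sum_(k < n) bcoef A k.+1.
  by rewrite -sumrB; apply: eq_bigr => i _; ring.
by rewrite dotE dot_canonical; ring.
Qed.

Lemma defect_classification : 0 < A.1 ->
  (dot A A - dot K A = -2 <-> h_zero_case A) /\
  (dot A A - dot K A < -2 <-> h_neg_case A).
Proof.
move=> a_gt0; rewrite defect_canonical.
have b0_ge0 := reduced_ge0 A_red 0; have b1_ge0 := reduced_ge0 A_red 1.
have b2_ge0 := reduced_ge0 A_red 2; have b10 := reduced_nonincreasing A_red 0.
have first3_le := reduced_first3_le A_red.
case: (ltrP 0 (bcoef A 3)) => [b2_gt0|b2_le0].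
  have := third_coef_defect_ge0 (reduced_ge0 A_red) (reduced_nonincreasing A_red) first3_le b2_gt0.
  have zero_b2 : h_zero_case A -> bcoef A 3 = 0.
    by case=> [[_ [_ ->]]|[[_ ->]|[[_ ->]|[_ [_ [_ ->]]]]]].
  have neg_b2 : h_neg_case A -> bcoef A 3 = 0 by case=> _ [_ ->].
  set S := \sum_(k < 9) _ => d_ge0.
  by split; split; [move=> ? | move/zero_b2 | move=> ? | move/neg_b2]; move=> *; exfalso; lia.
have b2_0 : bcoef A 3 = 0 by lia.
have tail3 k : (3 <= k)%N -> bcoef A k = 0.
  case: k => [//|k] k_ge2; have := reduced_ge0 A_red k.
  have := @nonincreasingW (fun k => bcoef A k.+1) 2 k (reduced_nonincreasing A_red) k_ge2.
  by rewrite /= b2_0; lia.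
have tail2 : (forall k, (2 <= k)%N -> bcoef A k = 0) <-> bcoef A 2 = 0.
  split=> [vanish|b1_0 k]; first exact: vanish.
  by case: k => [|[|[|k]]] // _; apply: tail3.
have tail1 : (forall k, bcoef A k = 0) <-> bcoef A 1 = 0 /\ bcoef A 2 = 0.
  split=> [vanish|[b0_0 b1_0] k]; first by split; apply: vanish.
  by case: k => [|[|[|k]]] //; apply: tail3.
rewrite (sum9_first2 (F := fun k => bcoef A k.+1 * (bcoef A k.+1 - 1))) /=;
  last by move=> k k_ge2; rewrite (tail3 k.+1) ?mul0r.
have a_ge1 : 1 <= A.1 by lia.
have first2_le : bcoef A 1 + bcoef A 2 <= A.1 by lia.
have := two_coef_defect_cases a_ge1 b1_ge0 b10 first2_le.
by rewrite /h_zero_case /h_neg_case tail2 tail1; tauto.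
Qed.

Lemma canonical_dot_le_norm c : adjunction_class c -> dot K A <= `|dot c A|.
Proof.
move=> c_adj; case: (lerP 0 c.1) => [c1_ge0|c1_lt0].
  exact: le_trans (canonical_dot_le c_adj c1_ge0) (ler_norm _).
rewrite -normrN -dot_oppc; apply: le_trans (ler_norm _).
by apply: canonical_dot_le; [exact: adjunction_class_oppc | rewrite oppr_ge0 ltW].
Qed.

Lemma is_h_canonical : nonzero_cls A -> is_h A (hc K A).
Proof.
move=> A_nz; split; first by exists K; split; first exact: canonical_adjunction_class.
move=> c c_adj; rewrite !hc_nonzero // lerD2l; apply: lez_pdiv2r => //.
by rewrite lerB // ger0_norm ?canonical_dot_ge0 ?canonical_dot_le_norm.
Qed.

End ReducedClasses.

Theorem mainTheorem11 (n : nat) (A : cls n) :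
  (n <= 9)%N -> nonzero_cls A -> reduced A -> 0 <= dot A A ->
  exists m : int, is_h A m /\
    (m = 0 <-> h_zero_case A) /\
    (m < 0 <-> h_neg_case A) /\
    (0 < m <-> ~ h_zero_case A /\ ~ h_neg_case A).
Proof.
move=> n_le9 A_nz A_red _.
have [w defect_even] : exists w, dot A A - dot (canonical_class n) A = 2 * w.
  have := canonical_characteristic A; rewrite eqz_mod_dvd => /dvdzP [q def_q].
  by exists (- q); lia.
have hK_w : hc (canonical_class n) A = 1 + w.
  by rewrite hc_nonzero // ger0_norm ?(canonical_dot_ge0 A_red n_le9) // defect_even mulKz.
have [zero_iff neg_iff] := defect_classification A_red n_le9 (reduced_nonzero_gt0 A_red A_nz).
exists (hc (canonical_class n) A); split; first exact: is_h_canonical A_red n_le9 A_nz.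
rewrite hK_w -zero_iff -neg_iff defect_even; lia.
Qed.
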